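(* Let $\mathcal{C}\subseteq\mathbb{R}^n$ be a nonempty closed convex set and $\theta_0\in\mathcal{C}$. Then for every $x\in\mathbb{R}^n$, $$\|\Pi_{F_{\mathcal{C}}(\theta_0)}(x)\|^2\ge\|\Pi_{K_{\mathcal{C}}}(x)\|^2.$$
   Context: $\Pi_S$ is Euclidean projection onto a closed convex set $S$. $F_{\mathcal{C}}(\theta_0)=\{\theta-\theta_0:\theta\in\mathcal{C}\}$; $T_{\mathcal{C}}(\theta)=\mathrm{cl}\{\alpha(\theta'-\theta):\alpha\ge0,\theta'\in\mathcal{C}\}$ is the tangent cone; $K_{\mathcal{C}}=\bigcap_{\theta\in\mathcal{C}}T_{\mathcal{C}}(\theta)$ is the core cone. *)

From HB Require Import structures.
From mathcomp Require Import all_boot all_order all_algebra.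
From mathcomp Require Import all_classical all_reals all_analysis.
Set Implicit Arguments. Unset Strict Implicit. Unset Printing Implicit Defensive.
Import Order.TTheory GRing.Theory Num.Theory numFieldNormedType.Exports.
Local Open Scope classical_set_scope.
Local Open Scope ring_scope.

Definition sqnorm (R : realType) (n : nat) (v : 'rV[R]_n) : R :=
  \sum_(i < n) v ord0 i ^+ 2.

Definition convex_set_rV (R : realType) (n : nat) (C : set 'rV[R]_n) : Prop :=
  forall x y t, C x -> C y -> 0 <= t -> t <= 1 -> C (t *: x + (1 - t) *: y).

Definition is_proj (R : realType) (n : nat) (S : set 'rV[R]_n) (x p : 'rV[R]_n) : Prop :=
  S p /\ forall q, S q -> sqnorm (x - p) <= sqnorm (x - q).

(* Pi_S(x): the (unique, for S nonempty closed convex) nearest point, chosen by choice *)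
Definition euclid_proj (R : realType) (n : nat) (S : set 'rV[R]_n) (x : 'rV[R]_n) : 'rV[R]_n :=
  xget 0 (is_proj S x).

Definition feas_dir (R : realType) (n : nat) (C : set 'rV[R]_n) (th0 : 'rV[R]_n) : set 'rV[R]_n :=
  [set th - th0 | th in C].

Definition tangent_cone (R : realType) (n : nat) (C : set 'rV[R]_n) (th : 'rV[R]_n) : set 'rV[R]_n :=
  @closure [the topologicalType of 'rV[R]_n] [set v | exists alpha : R, exists2 th', C th' & 0 <= alpha /\ v = alpha *: (th' - th)].

(* K_C = intersection of T_C(theta) over theta in C *)
Definition core_cone (R : realType) (n : nat) (C : set 'rV[R]_n) : set 'rV[R]_n :=
  \bigcap_(th in C) tangent_cone C th.

From HB Require Import structures.
From mathcomp Require Import all_boot all_order all_algebra.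
From mathcomp Require Import all_classical all_reals all_analysis.
From mathcomp Require Import ring lra.

(* Let p be the projection of x onto F := F_C(theta0) and q the projection
   onto K := K_C.  Since p = theta - theta0 for some theta in C, and p is the
   projection onto the convex set F, we have <x - p, theta' - theta> <= 0 for
   all theta' in C; this half-space inequality passes to the closure of the
   cone spanned by C - theta, i.e. to T_C(theta), and hence to q:
   <x - p, q> <= 0.  Since K is closed under positive scaling, q also
   satisfies |q|^2 <= <x, q>.  Together, |q|^2 <= <p, q>, and expanding
   0 <= |p - q|^2 gives |q|^2 <= |p|^2. *)

Set Implicit Arguments.
Unset Strict Implicit.
Unset Printing Implicit Defensive.
Import Order.TTheory GRing.Theory Num.Theory numFieldNormedType.Exports.
Local Open Scope classical_set_scope.
Local Open Scope ring_scope.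

Lemma le0_of_le_scaled (R : realFieldType) (a b : R) : 0 <= b ->
  (forall s, 0 < s -> s < 1 -> a <= s * b) -> a <= 0.
Proof.
move=> b_ge0 le_ab; rewrite leNgt; apply/negP => a_gt0.
have d_gt0 : 0 < 2 * a + b by lra.
have s_gt0 : 0 < a / (2 * a + b) by rewrite divr_gt0.
have s_lt1 : a / (2 * a + b) < 1 by rewrite ltr_pdivrMr // mul1r; lra.
have := le_ab _ s_gt0 s_lt1; rewrite mulrAC ler_pdivlMr //; nra.
Qed.

Lemma continuous_closure_sub (T U : topologicalType) (f : T -> U)
    (A : set T) (B : set U) :
  continuous f -> f @` A `<=` B -> f @` closure A `<=` closure B.
Proof.
move=> f_cont fAB _ [x Ax <-].
suff : closure A `<=` f @^-1` closure B by apply.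
have /closure_id -> : closed (f @^-1` closure B).
  by apply: preimage_closed; [move=> ? _; exact: f_cont | exact: closed_closure].
by apply: closureS => y Ay; apply: subset_closure; apply: fAB; exists y.
Qed.

Section euclidean_space.
Variables (R : realType) (n : nat).
Implicit Types (u v w x a th : 'rV[R]_n) (S C : set 'rV[R]_n).

Definition dot u v : R := \sum_(i < n) u ord0 i * v ord0 i.

Lemma dotBl u v w : dot (u - v) w = dot u w - dot v w.
Proof. by rewrite /dot -sumrB; apply: eq_bigr => i _; rewrite !mxE mulrBl. Qed.

Lemma dotZr u v (a : R) : dot u (a *: v) = a * dot u v.
Proof. by rewrite /dot mulr_sumr; apply: eq_bigr => i _; rewrite !mxE mulrCA. Qed.

Lemma dotvv u : dot u u = sqnorm u.
Proof. by apply: eq_bigr => i _; rewrite expr2. Qed.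

Lemma sqnorm_ge0 u : 0 <= sqnorm u.
Proof. by apply: sumr_ge0 => i _; rewrite sqr_ge0. Qed.

Lemma sqnorm0 : sqnorm (0 : 'rV[R]_n) = 0.
Proof. by rewrite /sqnorm big1 // => i _; rewrite mxE expr0n. Qed.

Lemma sqnormDZ u v (s : R) :
  sqnorm (u + s *: v) = sqnorm u + 2 * s * dot u v + s ^+ 2 * sqnorm v.
Proof.
rewrite /sqnorm /dot !mulr_sumr -!big_split /=.
by apply: eq_bigr => i _; rewrite !mxE; ring.
Qed.

Lemma sqnormB u v : sqnorm (u - v) = sqnorm u - 2 * dot u v + sqnorm v.
Proof. by rewrite -scaleN1r sqnormDZ; ring. Qed.

Lemma sqnormBC u v : sqnorm (u - v) = sqnorm (v - u).
Proof. by apply: eq_bigr => i _; rewrite !mxE; ring. Qed.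

Lemma continuous_sqnorm : continuous (@sqnorm R n).
Proof.
apply: (@continuous_big R _ +%R 0 xpredT add_continuous) => i _ v.
under eq_fun do rewrite expr2.
by apply: continuousM; exact: coord_continuous.
Qed.

Lemma continuous_dot u : continuous (dot u).
Proof.
apply: (@continuous_big R _ +%R 0 xpredT add_continuous) => i _ v.
by apply: continuousM; [exact: cst_continuous | exact: coord_continuous].
Qed.

Lemma closed_halfspace a : closed [set v | dot a v <= 0].
Proof.
apply: (@preimage_closed _ _ (dot a) [set z : R | z <= 0]) => [v _|].
  exact: continuous_dot.
exact: closed_le.
Qed.

Lemma continuous_sqnormB x : continuous (fun y : 'rV[R]_n => sqnorm (x - y)).
Proof.
move=> y; apply: continuous_comp; last exact: continuous_sqnorm.
by apply: (@continuousB _ _ _ (fun=> x) id); [exact: cst_continuous | exact: cvg_id].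
Qed.

(* [`|v|] is the sup norm of the row vector [v]; the [1 +] avoids square roots. *)
Lemma normr_le1Dsqnorm v : `|v| <= 1 + sqnorm v.
Proof.
rewrite -[`|v|]/(mx_norm v) mx_normrE; apply: bigmax_le => [|[i j] _ /=].
  by rewrite addr_ge0 ?sqnorm_ge0.
have vj_le : v i j ^+ 2 <= sqnorm v.
  rewrite (ord1 i) /sqnorm (bigD1 j) //= lerDl.
  by apply: sumr_ge0 => k _; exact: sqr_ge0.
rewrite -real_normK ?num_real // in vj_le.
have := normr_ge0 (v i j); nra.
Qed.

Lemma is_proj_exists S x : closed S -> S !=set0 -> exists p, is_proj S x p.
Proof.
move=> S_closed [s0 Ss0].
pose r := sqnorm (x - s0).
pose A := S `&` [set y | sqnorm (x - y) <= r].
have A_closed : closed A.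
  apply: closedI => //.
  apply: (@preimage_closed _ _ _ [set z : R | z <= r]); last exact: closed_le.
  by move=> y _; exact: continuous_sqnormB.
have A_bounded : bounded_set A.
  exists (`|x| + (1 + r)); split; first exact: num_real.
  move=> M ltM y [_ /= xy_le]; apply: ltW; apply: le_lt_trans ltM.
  rewrite -[y](subrK x) (le_trans (ler_normD _ _)) // addrC lerD2l.
  by rewrite (le_trans (normr_le1Dsqnorm _)) // lerD2l sqnormBC.
have A_compact := bounded_closed_compact A_bounded A_closed.
have A_ne0 : A !=set0 by exists s0; split => //=; exact: lexx.
have [p pA p_min] := EVT_min_rV A_ne0 A_compact
  (continuous_subspaceT (@continuous_sqnormB x)).
move: pA; rewrite inE => -[Sp p_le]; exists p; split => // q Sq.
have [q_le|q_gt] := leP (sqnorm (x - q)) r; first by apply: p_min; rewrite inE.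
exact: le_trans p_le (ltW q_gt).
Qed.

Lemma is_proj_euclid_proj S x :
  (exists p, is_proj S x p) -> is_proj S x (euclid_proj S x).
Proof. exact: xgetPex. Qed.

Lemma euclid_proj_default S x :
  ~ (exists p, is_proj S x p) -> euclid_proj S x = 0.
Proof. by move=> no_proj; apply: xgetPN => p p_proj; apply: no_proj; exists p. Qed.

Lemma euclid_projP S x : closed S -> S !=set0 -> is_proj S x (euclid_proj S x).
Proof. by move=> S_closed S_ne0; apply/is_proj_euclid_proj/is_proj_exists. Qed.

Lemma is_proj_convex S x p f :
  convex_set_rV S -> is_proj S x p -> S f -> dot (x - p) (f - p) <= 0.
Proof.
move=> S_convex [Sp p_min] Sf.
suff : 2 * dot (x - p) (f - p) <= 0 by lra.
apply: (le0_of_le_scaled (sqnorm_ge0 (f - p))) => s s_gt0 s_lt1.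
have Sps : S (p + s *: (f - p)).
  have -> : p + s *: (f - p) = s *: f + (1 - s) *: p.
    by rewrite scalerBr scalerBl scale1r addrCA addrA.
  by apply: S_convex => //; lra.
have := p_min _ Sps.
rewrite opprD addrA -scaleNr sqnormDZ.
have := sqnorm_ge0 (f - p); nra.
Qed.

Lemma is_proj_cone S x q : (forall t v, 0 <= t -> S v -> S (t *: v)) ->
  is_proj S x q -> sqnorm q <= dot x q.
Proof.
move=> S_cone [Sq q_min].
suff : - 2 * dot (x - q) q <= 0 by rewrite dotBl dotvv; lra.
apply: (le0_of_le_scaled (sqnorm_ge0 q)) => s s_gt0 s_lt1.
have := q_min _ (S_cone (1 - s) q ltac:(lra) Sq).
rewrite scalerBl scale1r opprB addrCA addrC sqnormDZ.
have := sqnorm_ge0 q; nra.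
Qed.

Lemma feas_dirE C th0 : feas_dir C th0 = (fun y => y + th0) @^-1` C.
Proof.
apply/seteqP; split => [_ [th Cth <-]|y Cy] /=; first by rewrite subrK.
by exists (y + th0); rewrite ?addrK.
Qed.

Lemma closed_feas_dir C th0 : closed C -> closed (feas_dir C th0).
Proof.
move=> C_closed; rewrite feas_dirE; apply: preimage_closed => // y _.
by apply: (@continuousD _ _ _ id (fun=> th0)); [exact: cvg_id | exact: cst_continuous].
Qed.

Lemma feas_dir0 C th0 : C th0 -> feas_dir C th0 0.
Proof. by exists th0; rewrite ?subrr. Qed.

Lemma convex_feas_dir C th0 : convex_set_rV C -> convex_set_rV (feas_dir C th0).
Proof.
move=> C_convex _ _ t [th1 Cth1 <-] [th2 Cth2 <-] t_ge0 t_le1.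
exists (t *: th1 + (1 - t) *: th2); first exact: C_convex.
by apply/rowP => i; rewrite !mxE; ring.
Qed.

Lemma tangent_coneZ C th t v :
  0 <= t -> tangent_cone C th v -> tangent_cone C th (t *: v).
Proof.
move=> t_ge0 Tv.
apply: (continuous_closure_sub _ _ (ex_intro2 _ _ v Tv erefl)).
  exact: scaler_continuous.
move=> _ [_ [alpha [th' Cth' [alpha_ge0 ->]]] <-].
by exists (t * alpha), th'; rewrite ?scalerA ?mulr_ge0.
Qed.

Lemma core_coneZ C t v : 0 <= t -> core_cone C v -> core_cone C (t *: v).
Proof. by move=> t_ge0 Kv th Cth; apply: tangent_coneZ => //; exact: Kv. Qed.

Lemma tangent_cone_sub_halfspace C th a :
  (forall th', C th' -> dot a (th' - th) <= 0) ->
  tangent_cone C th `<=` [set v | dot a v <= 0].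
Proof.
move=> a_le; rewrite [X in _ `<=` X](closure_id _).1; last exact: closed_halfspace.
apply: closureS => _ [alpha [th' Cth' [alpha_ge0 ->]]] /=.
by rewrite dotZr mulr_ge0_le0 ?a_le.
Qed.

End euclidean_space.

Theorem lemma11 (R : realType) (n : nat) (C : set 'rV[R]_n) (th0 : 'rV[R]_n) :
  C !=set0 -> closed C -> convex_set_rV C -> C th0 ->
  forall x : 'rV[R]_n,
    sqnorm (euclid_proj (core_cone C) x) <= sqnorm (euclid_proj (feas_dir C th0) x).
Proof.
move=> _ C_closed C_convex Cth0 x.
have p_proj := euclid_projP x (closed_feas_dir C_closed)
  (ex_intro _ _ (feas_dir0 Cth0)).
set p := euclid_proj _ x in p_proj *.
have [/is_proj_euclid_proj q_proj|no_proj] :=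
  pselect (exists q, is_proj (core_cone C) x q); last first.
  (* This case cannot occur, but the junk value [0] makes the bound trivial. *)
  by rewrite euclid_proj_default ?sqnorm0 ?sqnorm_ge0.
set q := euclid_proj _ x in q_proj *.
have q_le : sqnorm q <= dot x q := is_proj_cone (@core_coneZ _ _ C) q_proj.
have pq_le : dot (x - p) q <= 0.
  have [th Cth p_def] := p_proj.1.
  apply: (tangent_cone_sub_halfspace (th := th)); last exact: q_proj.1.
  move=> th' Cth'.
  have -> : th' - th = th' - th0 - p by rewrite -p_def opprB addrA subrK.
  exact: is_proj_convex (convex_feas_dir C_convex) p_proj
    (ex_intro2 _ _ th' Cth' erefl).
have := sqnorm_ge0 (p - q); rewrite sqnormB.
move: q_le pq_le; rewrite dotBl; lra.
Qed.
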